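(* Let $F$ be a recurrent set and let $X\subset F$ be a bifix code. Then $X$ is an $F$-thin and $F$-maximal bifix code if and only if its $F$-degree $d_F(X)$ is finite. In this case the set $I(X)$ of internal factors of $X$ satisfies $I(X)=\{w\in F\mid \delta_X(w)<d_F(X)\}$.
   Context: $A$ is a finite alphabet. A set $F\subset A^*$ is recurrent if it is nonempty, contains all factors of its elements, and for all $u,w\in F$ there is $v\in F$ with $uvw\in F$. A bifix code is a set $X\subset A^+$ such that no element is a proper prefix or a proper suffix of another element. For $X\subset F$, $X$ is an $F$-maximal bifix code if it is not properly contained in any bifix code $Y\subset F$, and $F$-thin if some word of $F$ is not a factor of a word of $X$. A parse of a word $w$ with respect to $X$ is a triple $(v,x,u)$ with $w=vxu$, $v\in A^*\setminus A^*X$ (no suffix of $v$ lies in $X$), $x\in X^*$, $u\in A^*\setminus XA^*$ (no prefix of $u$ lies in $X$); $\delta_X(w)$ is the number of parses of $w$. The $F$-degree is $d_F(X)=\max_{w\in F}\delta_X(w)$ (possibly infinite). $I(X)=\{w\in A^*\mid A^+wA^+\cap X\ne\emptyset\}$. *)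

From mathcomp Require Import all_boot.
From Stdlib Require Import ClassicalEpsilon.
Set Implicit Arguments. Unset Strict Implicit. Unset Printing Implicit Defensive.

Section Words.
Variable A : finType.
Definition word := seq A.
Definition lang := word -> Prop.

Definition pb (P : Prop) : bool :=
  if excluded_middle_informative P then true else false.

Definition lsubset (X Y : lang) : Prop := forall w, X w -> Y w.

Definition factor (u w : word) : Prop := exists p s, w = p ++ u ++ s.

Definition recurrent (F : lang) : Prop :=
  (exists w, F w) /\
  (forall w u, F w -> factor u w -> F u) /\
  (forall u w, F u -> F w -> exists v, F v /\ F (u ++ v ++ w)).

Definition proper_prefix (u x : word) : Prop := exists v, v <> [::] /\ x = u ++ v.
Definition proper_suffix (u x : word) : Prop := exists v, v <> [::] /\ x = v ++ u.

Definition bifix_code (X : lang) : Prop :=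
  (forall x, X x -> x <> [::]) /\
  (forall x y, X x -> X y -> ~ proper_prefix x y /\ ~ proper_suffix x y).

Definition F_maximal_bifix (F X : lang) : Prop :=
  bifix_code X /\ lsubset X F /\
  forall Y, bifix_code Y -> lsubset Y F -> lsubset X Y -> lsubset Y X.

Definition F_thin (F X : lang) : Prop :=
  exists w, F w /\ ~ (exists x, X x /\ factor w x).

Definition in_AstarX (X : lang) (v : word) : Prop := exists p x, X x /\ v = p ++ x.
Definition in_XAstar (X : lang) (u : word) : Prop := exists x s, X x /\ u = x ++ s.

Inductive star (X : lang) : lang :=
| star_nil : star X [::]
| star_cons : forall x y, X x -> star X y -> star X (x ++ y).

Definition is_parse (X : lang) (v x u : word) : Prop :=
  ~ in_AstarX X v /\ star X x /\ ~ in_XAstar X u.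

(* delta_X(w): number of parses of w.  A parse (v,x,u) of w is determined by
   the positions i = |v| <= j = |v x| in w, so we count such pairs. *)
Definition delta (X : lang) (w : word) : nat :=
  #|[set ij : 'I_(size w).+1 * 'I_(size w).+1 |
      (ij.1 <= ij.2)%N &&
      pb (is_parse X (take ij.1 w) (drop ij.1 (take ij.2 w)) (drop ij.2 w))]|.

Definition is_F_degree (F X : lang) (d : nat) : Prop :=
  (exists w, F w /\ delta X w = d) /\ (forall w, F w -> (delta X w <= d)%N).

Definition internal (X : lang) (w : word) : Prop :=
  exists x p s, X x /\ p <> [::] /\ s <> [::] /\ x = p ++ w ++ s.
End Words.

From mathcomp Require Import all_boot.
From Stdlib Require Import ClassicalEpsilon Classical.
Set Implicit Arguments. Unset Strict Implicit. Unset Printing Implicit Defensive.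

(* Since X is a prefix code, a parse (v, x, u) of w is determined by v, and since X
   is a suffix code it is determined by u: delta_X(w) is the number of prefixes of w
   without a suffix in X, and also the number of suffixes of w without a prefix in X.
   Consequently delta_X can only grow when a word is extended on either side, and it
   grows strictly from an internal factor w of x in X to x.  A word w0 of F of
   maximal degree d can only be extended inside F by words ending in X; this forces
   every w in F with delta_X(w) < d to be internal (extend it into w t w0), the code
   X to be F-thin, and every bifix code Y between X and F to equal X.
   Conversely, let u in F be no factor of a word of X.  If every nonempty word of F
   has a suffix in X or is a suffix of a word of X, then every prefix of u t w
   longer than u ends in X, so delta_X(w) <= delta_X(u t w) = delta_X(u) for all w
   in F; the same holds in the dual situation.  If neither situation occurs, some
   r in F is comparable in the prefix order to no word of X, some s in F is
   comparable in the suffix order to no word of X, and for r v s in F the set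
   X + {r v s} is a bifix code in F strictly containing X. *)

Lemma pbP (P : Prop) : reflect P (pb P).
Proof. by rewrite /pb; case: excluded_middle_informative => h; [left | right]. Qed.

Lemma card_ord_count n (P : pred nat) : #|[set i : 'I_n | P i]| = count P (iota 0 n).
Proof.
rewrite -val_enum_ord count_map cardsE cardE /enum_mem size_filter.
rewrite [X in _ = count _ X](@eq_filter _ _ predT) // filter_predT.
by apply: eq_count => i; rewrite !inE.
Qed.

Section SeqCat.
Variable T : Type.
Implicit Types s e p w : seq T.

Lemma cat_eq_cases (a b c d : seq T) : a ++ b = c ++ d ->
  (exists e, a = c ++ e /\ d = e ++ b) \/ (exists e, c = a ++ e /\ b = e ++ d).
Proof.
elim: a c => [|z a IH] [|z' c] /= h.
- by right; exists [::].
- by right; exists (z' :: c).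
- by left; exists (z :: a).
by case: h => -> /IH [[e [-> ->]]|[e [-> ->]]]; [left|right]; exists e.
Qed.

Lemma cat_neq_nil_l p s : p <> [::] -> p ++ s <> [::].
Proof. by case: p. Qed.

Lemma cat_neq_nil_r p s : s <> [::] -> p ++ s <> [::].
Proof. by case: p => //; case: s. Qed.

Lemma take_neq_nil k s : 0 < k <= size s -> take k s <> [::].
Proof.
by case/andP=> k_gt0 le_ks /(congr1 size); rewrite size_takel // => k0; rewrite k0 in k_gt0.
Qed.

Lemma drop_neq_nil k s : k < size s -> drop k s <> [::].
Proof. by move=> lt_ks /(congr1 size) /eqP; rewrite size_drop subn_eq0 leqNgt lt_ks. Qed.

Lemma cat_eq_self_r s e : s = s ++ e -> e = [::].
Proof. by move/(congr1 size)/eqP; rewrite size_cat -{1}[size s]addn0 eqn_add2l eq_sym => /nilP. Qed.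

Lemma cat_eq_self_l s e : s = e ++ s -> e = [::].
Proof. by move/(congr1 size)/eqP; rewrite size_cat -{1}[size s]add0n eqn_add2r eq_sym => /nilP. Qed.

Lemma drop_take_subn i j s : i <= j -> drop i (take j s) = take (j - i) (drop i s).
Proof. by move=> le_ij; rewrite take_drop subnK. Qed.

Lemma drop_subn i j s : i <= j -> drop j s = drop (j - i) (drop i s).
Proof. by move=> le_ij; rewrite drop_drop subnK. Qed.

End SeqCat.

Section Words.
Variable A : finType.
Implicit Types w p q s u x y : word A.

Lemma bifix_code_add (X : lang A) z : bifix_code X -> z <> [::] ->
  (forall x, X x -> [/\ ~ proper_prefix x z, ~ proper_prefix z x,
                        ~ proper_suffix x z & ~ proper_suffix z x]) ->
  bifix_code (fun y => X y \/ y = z).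
Proof.
move=> [X_neq_nil X_bifix] z_neq0 z_free; split=> [y [/X_neq_nil|->] //|x y].
case=> [Xx|->] [Xy|->]; first exact: X_bifix.
- by have [] := z_free x Xx.
- by have [] := z_free y Xy.
by split=> -[e [e_neq0 ez]]; apply: e_neq0; [apply: cat_eq_self_r ez | apply: cat_eq_self_l ez].
Qed.

Lemma bounded_degree (F X : lang A) N : (exists w, F w) ->
  (forall w, F w -> delta X w <= N) -> exists d, is_F_degree F X d.
Proof.
move=> [u Fu] le_N; pose P k := pb (exists w, F w /\ delta X w = k).
have exP : exists k, P k by exists (delta X u); apply/pbP; exists u.
have ubP k : P k -> k <= N by move=> /pbP [w [Fw <-]]; apply: le_N.
have [d /pbP Pd maxd] := ex_maxnP exP ubP.
by exists d; split=> // w Fw; apply: maxd; apply/pbP; exists w.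
Qed.

Section Parses.
Variable X : lang A.
Hypothesis X_neq_nil : forall x, X x -> x <> [::].
Hypothesis X_prefix_free : forall x y, X x -> X y -> ~ proper_prefix x y.
Hypothesis X_suffix_free : forall x y, X x -> X y -> ~ proper_suffix x y.

Lemma prefix_free_cat x e : X x -> X (x ++ e) -> e = [::].
Proof. by case: e => // a e Xx Xxe; case: (X_prefix_free Xx Xxe); exists (a :: e). Qed.

Lemma suffix_free_cat x e : X x -> X (e ++ x) -> e = [::].
Proof. by case: e => // a e Xx Xex; case: (X_suffix_free Xx Xex); exists (a :: e). Qed.

Lemma star1 x : X x -> star X x.
Proof. by move=> Xx; rewrite -[x]cats0; apply: star_cons (star_nil X). Qed.

Lemma star_cat x y : star X x -> star X y -> star X (x ++ y).
Proof. by elim=> // x1 x2 Xx1 _ IH /IH; rewrite -catA; apply: star_cons. Qed.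

Lemma star_last_cases z : star X z ->
  z = [::] \/ exists z' x, z = z' ++ x /\ star X z' /\ X x.
Proof.
elim=> [|x y Xx _ [->|[y' [x' [-> [y'X Xx']]]]]]; first by left.
  by right; exists [::], x; rewrite cats0; split; last split; [|apply: star_nil|].
by right; exists (x ++ y'), x'; rewrite catA; split; last split; [|apply: star_cons|].
Qed.

Lemma star_prefix_parse w : exists x y, w = x ++ y /\ star X x /\ ~ in_XAstar X y.
Proof.
elim: {w}(size w).+1 {-2}w (ltnSn (size w)) => // n IH w lt_wn.
case: (classic (in_XAstar X w)) => [[x0 [s [Xx0 ew]]]|wNXA]; last first.
  by exists [::], w; split; last split; [|apply: star_nil|].
subst w; have lt_sn : size s < n.
  rewrite -ltnS; apply: leq_trans _ lt_wn.
  rewrite ltnS size_cat -[X in X < _]add0n ltn_add2r lt0n size_eq0.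
  by apply/eqP; apply: X_neq_nil.
have [x [y [-> [xX yNXA]]]] := IH s lt_sn.
by exists (x0 ++ x), y; rewrite catA; split; last split; [|apply: star_cons|].
Qed.

Lemma star_suffix_parse w : exists v x, w = v ++ x /\ star X x /\ ~ in_AstarX X v.
Proof.
elim: {w}(size w).+1 {-2}w (ltnSn (size w)) => // n IH w lt_wn.
case: (classic (in_AstarX X w)) => [[p [x0 [Xx0 ew]]]|wNAX]; last first.
  by exists w, [::]; rewrite cats0; split; last split; [|apply: star_nil|].
subst w; have lt_pn : size p < n.
  rewrite -ltnS; apply: leq_trans _ lt_wn.
  rewrite ltnS size_cat -[X in X < _]addn0 ltn_add2l lt0n size_eq0.
  by apply/eqP; apply: X_neq_nil.
have [v [x [-> [xX vNAX]]]] := IH p lt_pn.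
exists v, (x ++ x0); split; first by rewrite catA.
by split=> //; apply: star_cat xX (star1 Xx0).
Qed.

Lemma star_prefix_parse_uniq x x' y y' : star X x -> star X x' ->
  ~ in_XAstar X y -> ~ in_XAstar X y' -> x ++ y = x' ++ y' -> x = x'.
Proof.
move=> xX; elim: xX x' => [|x1 x2 Xx1 _ IH] x' [|x1' x2' Xx1' x2'X] yNXA y'NXA //=.
- by move=> eyy'; case: yNXA; exists x1', (x2' ++ y'); rewrite eyy' catA.
- by move=> eyy'; case: y'NXA; exists x1, (x2 ++ y); rewrite -eyy' catA.
rewrite -!catA => /cat_eq_cases [[e [ex1 ex2]]|[e [ex1' ex2]]].
- have e0 : e = [::] by apply: (prefix_free_cat Xx1'); rewrite -ex1.
  by move: ex1 ex2; rewrite e0 cats0 => -> /esym /(IH _ x2'X yNXA y'NXA) ->.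
- have e0 : e = [::] by apply: (prefix_free_cat Xx1); rewrite -ex1'.
  by move: ex1' ex2; rewrite e0 cats0 => -> /(IH _ x2'X yNXA y'NXA) ->.
Qed.

Lemma star_suffix_parse_uniq v v' x x' : star X x -> star X x' ->
  ~ in_AstarX X v -> ~ in_AstarX X v' -> v ++ x = v' ++ x' -> x = x'.
Proof.
elim: {x}(size x).+1 {-2}x (ltnSn (size x)) x' v v' => // n IH x lt_xn x' v v' xX x'X vNAX v'NAX.
case: (star_last_cases xX) => [->|[x1 [x2 [ex [x1X Xx2]]]]];
  case: (star_last_cases x'X) => [->|[x1' [x2' [ex' [x1'X Xx2']]]]] //; rewrite ?ex ?ex' ?cats0.
- by move=> evv'; case: vNAX; exists (v' ++ x1'), x2'; rewrite evv' !catA.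
- by move=> evv'; case: v'NAX; exists (v ++ x1), x2; rewrite -evv' !catA.
have lt_x1n : size x1 < n.
  rewrite -ltnS; apply: leq_trans _ lt_xn; rewrite ltnS ex size_cat.
  by rewrite -[X in X < _]addn0 ltn_add2l lt0n size_eq0; apply/eqP; apply: X_neq_nil.
rewrite !catA => /cat_eq_cases [[e [ev ex2]]|[e [ev' ex2']]].
- have e0 : e = [::] by apply: (suffix_free_cat Xx2); rewrite -ex2.
  move: ev ex2; rewrite e0 cats0 => ev ->; congr (_ ++ _).
  exact: IH _ lt_x1n _ _ _ x1X x1'X vNAX v'NAX ev.
- have e0 : e = [::] by apply: (suffix_free_cat Xx2'); rewrite -ex2'.
  move: ev' ex2'; rewrite e0 cats0 => ev' ->; congr (_ ++ _).
  exact: IH _ lt_x1n _ _ _ x1X x1'X vNAX v'NAX (esym ev').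
Qed.

Definition prefix_count w :=
  count (fun i => ~~ pb (in_AstarX X (take i w))) (iota 0 (size w).+1).

Definition suffix_count w :=
  count (fun i => ~~ pb (in_XAstar X (drop i w))) (iota 0 (size w).+1).

Lemma delta_prefix_count w : delta X w = prefix_count w.
Proof.
rewrite /delta /prefix_count -card_ord_count.
set S := [set ij : 'I_(size w).+1 * 'I_(size w).+1 | _].
have first_inj : {in S &, injective (fun ij : 'I_(size w).+1 * 'I_(size w).+1 => ij.1)}.
  move=> [i j] [i' j']; rewrite !inE /= => /andP [le_ij /pbP [_ [xX uNXA]]]
    /andP [le_ij' /pbP [_ [x'X u'NXA]]] ei; subst i'.
  rewrite (drop_take_subn w le_ij) (drop_subn w le_ij) in xX uNXA.
  rewrite (drop_take_subn w le_ij') (drop_subn w le_ij') in x'X u'NXA.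
  have := star_prefix_parse_uniq xX x'X uNXA u'NXA; rewrite !cat_take_drop.
  have le_sizes k : k < (size w).+1 -> k - i <= size (drop i w).
    by rewrite size_drop ltnS => /leq_sub2r; apply.
  move=> /(_ erefl) /(congr1 size); rewrite !size_takel ?le_sizes //.
  by move=> eji; congr pair; apply: val_inj; rewrite /= -(subnK le_ij) -(subnK le_ij') eji.
rewrite -(card_in_imset first_inj); congr #|pred_of_set _|; apply/setP => i.
rewrite inE; apply/imsetP/idP => [[[i0 j] + ->]|/pbP vNAX].
  by rewrite inE => /andP [_ /pbP [vNAX _]]; apply/pbP.
have [x [u [exu [xX uNXA]]]] := star_prefix_parse (drop i w).
have le_iw : i <= size w by rewrite -ltnS.
have lt_jw : i + size x < (size w).+1.
  have : size x <= size w - i by rewrite -size_drop exu size_cat leq_addr.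
  by rewrite ltnS -(leq_add2l i) subnKC.
exists (i, Ordinal lt_jw) => //; rewrite inE /= leq_addr; apply/pbP.
rewrite (drop_take_subn w (leq_addr _ _)) (drop_subn w (leq_addr _ _)) addKn exu.
by rewrite take_size_cat // drop_size_cat.
Qed.

Lemma delta_suffix_count w : delta X w = suffix_count w.
Proof.
rewrite /delta /suffix_count -card_ord_count.
set S := [set ij : 'I_(size w).+1 * 'I_(size w).+1 | _].
have last_inj : {in S &, injective (fun ij : 'I_(size w).+1 * 'I_(size w).+1 => ij.2)}.
  move=> [i j] [i' j']; rewrite !inE /= => /andP [le_ij /pbP [vNAX [xX _]]]
    /andP [le_ij' /pbP [v'NAX [x'X _]]] ej; subst j'.
  have le_jw : j <= size w by rewrite -ltnS.
  rewrite -(take_takel w le_ij) in vNAX; rewrite -(take_takel w le_ij') in v'NAX.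
  have := star_suffix_parse_uniq xX x'X vNAX v'NAX; rewrite !cat_take_drop.
  move=> /(_ erefl) /(congr1 size); rewrite !size_drop size_takel // => eij.
  by congr pair; apply: val_inj; apply/eqP; rewrite -(eqn_add2r (j - i)) {2}eij !subnKC.
rewrite -(card_in_imset last_inj); congr #|pred_of_set _|; apply/setP => j.
rewrite inE; apply/imsetP/idP => [[[i j0] + ->]|/pbP uNXA].
  by rewrite inE => /andP [_ /pbP [_ [_ uNXA]]]; apply/pbP.
have [v [x [evx [xX vNAX]]]] := star_suffix_parse (take j w).
have le_jw : j <= size w by rewrite -ltnS.
have le_vj : size v <= j by rewrite -(size_takel le_jw) evx size_cat leq_addr.
have lt_iw : size v < (size w).+1 by apply: leq_ltn_trans le_vj (ltn_ord j).
exists (Ordinal lt_iw, j) => //; rewrite inE /= le_vj; apply/pbP.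
by rewrite -(take_takel w le_vj) evx take_size_cat // drop_size_cat.
Qed.

Lemma delta_catr w q : delta X (w ++ q) =
  delta X w + count (fun k => ~~ pb (in_AstarX X (w ++ take k q))) (iota 1 (size q)).
Proof.
rewrite !delta_prefix_count /prefix_count size_cat -addSn iotaD count_cat.
congr (_ + _).
  apply: eq_in_count => i; rewrite mem_iota add0n ltnS => /andP [_ le_iw].
  rewrite take_cat; case: ltnP => // le_wi.
  have -> : i = size w by apply/eqP; rewrite eqn_leq le_iw.
  by rewrite subnn take0 cats0 take_size.
rewrite add0n -addn1 iotaDl count_map; apply: eq_count => k /=.
by rewrite take_cat ltnNge leq_addr /= addKn.
Qed.

Lemma delta_catl p w : delta X (p ++ w) =
  count (fun k => ~~ pb (in_XAstar X (drop k p ++ w))) (iota 0 (size p)) + delta X w.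
Proof.
rewrite !delta_suffix_count /suffix_count size_cat -addnS iotaD count_cat.
congr (_ + _).
  by apply: eq_in_count => i; rewrite mem_iota add0n => /andP [_ lt_ip]; rewrite drop_cat lt_ip.
rewrite add0n -{1}[size p]addn0 iotaDl count_map; apply: eq_count => k /=.
by rewrite drop_cat ltnNge leq_addr /= addKn.
Qed.

Lemma delta_catr_eq w q :
  (forall k, 0 < k <= size q -> in_AstarX X (w ++ take k q)) -> delta X (w ++ q) = delta X w.
Proof.
move=> wqAX; rewrite delta_catr -[RHS]addn0; congr (_ + _).
apply/eqP; rewrite eqn0Ngt -has_count; apply/hasPn => k.
by rewrite mem_iota add1n ltnS => /wqAX /pbP ->.
Qed.

Lemma delta_catr_lt w q : q <> [::] -> ~ in_AstarX X (w ++ q) -> delta X w < delta X (w ++ q).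
Proof.
move=> /eqP q_neq0 wqNAX; rewrite delta_catr -[X in X < _]addn0 ltn_add2l -has_count.
apply/hasP; exists (size q); last by rewrite take_size; apply/pbP.
by rewrite mem_iota add1n ltnS leqnn andbT lt0n size_eq0.
Qed.

Lemma delta_catl_eq p w :
  (forall k, k < size p -> in_XAstar X (drop k p ++ w)) -> delta X (p ++ w) = delta X w.
Proof.
move=> pwXA; rewrite delta_catl -[RHS]add0n; congr (_ + _).
apply/eqP; rewrite eqn0Ngt -has_count; apply/hasPn => k.
by rewrite mem_iota add0n => /pwXA /pbP ->.
Qed.

Lemma delta_catl_lt p w : p <> [::] -> ~ in_XAstar X (p ++ w) -> delta X w < delta X (p ++ w).
Proof.
move=> /eqP p_neq0 pwNXA; rewrite delta_catl -[X in X < _]add0n ltn_add2r -has_count.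
apply/hasP; exists 0; last by rewrite drop0; apply/pbP.
by rewrite mem_iota lt0n size_eq0.
Qed.

Lemma delta_factor_le p w s : delta X w <= delta X (p ++ w ++ s).
Proof. by rewrite catA delta_catr delta_catl; apply: leq_trans (leq_addl _ _) (leq_addr _ _). Qed.

Lemma delta_internal_lt p w s : X (p ++ w ++ s) -> p <> [::] -> s <> [::] ->
  delta X w < delta X (p ++ w ++ s).
Proof.
move=> Xpws p_neq0 s_neq0; apply: leq_trans (_ : delta X (p ++ w) <= _); last first.
  by rewrite catA; exact: (delta_factor_le [::]).
apply: delta_catl_lt => // -[x [e [Xx epw]]].
apply: (X_prefix_free Xx Xpws); exists (e ++ s); split; first exact: cat_neq_nil_r.
by rewrite catA epw catA.
Qed.

Definition suffix_comparable s :=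
  in_AstarX X s \/ exists p x, X x /\ x = p ++ s.

Definition prefix_comparable r :=
  in_XAstar X r \/ exists x q, X x /\ x = r ++ q.

Section Recurrent.
Variable F : lang A.
Hypothesis F_rec : recurrent F.
Hypothesis X_sub_F : lsubset X F.

Lemma recurrent_factor p w s : F (p ++ w ++ s) -> F w.
Proof. by case: F_rec => _ [F_fact _] Fpws; apply: F_fact Fpws _; exists p, s. Qed.

Lemma recurrent_bridge u w : F u -> F w -> exists v, F (u ++ v ++ w).
Proof. by case: F_rec => _ [_ F_conn] Fu Fw; have [v [_ Fuvw]] := F_conn u w Fu Fw; exists v. Qed.

Lemma delta_max_extension w q : (forall z, F z -> delta X z <= delta X w) ->
  F (w ++ q) -> q <> [::] -> in_AstarX X (w ++ q).
Proof.
move=> w_max Fwq q_neq0; apply: NNPP => wqNAX.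
by have := delta_catr_lt q_neq0 wqNAX; rewrite ltnNge w_max.
Qed.

Lemma internal_delta_lt d w : is_F_degree F X d -> internal X w -> F w /\ delta X w < d.
Proof.
move=> [_ d_max] [x [p [s [Xx [p_neq0 [s_neq0 ex]]]]]]; subst x.
split; first exact: (recurrent_factor (X_sub_F Xx)).
exact: leq_trans (delta_internal_lt Xx p_neq0 s_neq0) (d_max _ (X_sub_F Xx)).
Qed.

Lemma delta_lt_internal d w : is_F_degree F X d -> F w -> delta X w < d -> internal X w.
Proof.
move=> [[w0 [Fw0 dw0]] d_max] Fw lt_wd; apply: NNPP => wNint.
have w0_max z : F z -> delta X z <= delta X w0 by rewrite dw0; apply: d_max.
have [t Fwtw0] := recurrent_bridge Fw Fw0.
have [t' Fw0t'wtw0] := recurrent_bridge Fw0 Fwtw0.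
have wq_AX k : 0 < k <= size (t ++ w0) -> in_AstarX X (w ++ take k (t ++ w0)).
  move=> k_range; set q := take k (t ++ w0).
  have Fw0t'wq : F (w0 ++ (t' ++ w ++ q)).
    apply: (@recurrent_factor [::] _ (drop k (t ++ w0))).
    by rewrite /= -!catA cat_take_drop.
  have q_neq0 : q <> [::] by apply: take_neq_nil.
  have [p [x [Xx]]] := delta_max_extension w0_max Fw0t'wq (cat_neq_nil_r (cat_neq_nil_r q_neq0)).
  rewrite catA => /cat_eq_cases [[[|a e] [_ ex]]|[e [_ ewq]]].
  - by exists [::], x.
  - by case: wNint; exists x, (a :: e), q.
  by exists e, x.
have := delta_factor_le (w ++ t) w0 [::].
by rewrite cats0 -catA (delta_catr_eq wq_AX) dw0 leqNgt lt_wd.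
Qed.

Lemma degree_thin d : is_F_degree F X d -> F_thin F X.
Proof.
move=> Xd; have [[w0 [Fw0 dw0]] d_max] := Xd.
have [[x0 Xx0]|X_empty] := classic (exists x, X x); last first.
  by exists w0; split=> // -[x [Xx _]]; apply: X_empty; exists x.
have [t Fw1] := recurrent_bridge Fw0 (X_sub_F Xx0).
set w1 := w0 ++ t ++ x0 in Fw1.
have dw1 : delta X w1 = d.
  by apply/eqP; rewrite eqn_leq d_max //= -dw0 (delta_factor_le [::] w0).
have w1_neq0 : w1 <> [::] by apply/cat_neq_nil_r/cat_neq_nil_r/X_neq_nil.
have [t1 Fw1t1w1] := recurrent_bridge Fw1 Fw1.
have [t2 F_witness] := recurrent_bridge Fw1t1w1 Fw1.
exists ((w1 ++ t1 ++ w1) ++ t2 ++ w1); split=> // -[x [Xx [p [s ex]]]].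
have w1_int : internal X w1.
  have w1s_neq0 r r' : r ++ w1 ++ r' <> [::] by apply/cat_neq_nil_r/cat_neq_nil_l.
  exists x, (p ++ w1 ++ t1), (t2 ++ w1 ++ s).
  by do ![split; first done]; rewrite ex !catA.
by have [_] := internal_delta_lt Xd w1_int; rewrite dw1 ltnn.
Qed.

Lemma degree_maximal d : is_F_degree F X d -> F_maximal_bifix F X.
Proof.
move=> [[w0 [Fw0 dw0]] d_max].
have w0_max z : F z -> delta X z <= delta X w0 by rewrite dw0; apply: d_max.
split; first by split=> // x y Xx Xy; split; [apply: X_prefix_free | apply: X_suffix_free].
split=> // Y [Y_neq_nil Y_bifix] Y_sub_F X_sub_Y y Yy.
have [t Fw0ty] := recurrent_bridge Fw0 (Y_sub_F _ Yy).
have [p [x [Xx]]] := delta_max_extension w0_max Fw0ty (cat_neq_nil_r (Y_neq_nil _ Yy)).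
rewrite catA => /cat_eq_cases [[e [_]]|[e [_]]].
- case: e => [/= ex|a e ex]; first by rewrite -ex.
  by case: (Y_bifix _ _ Yy (X_sub_Y _ Xx)) => _ []; exists (a :: e).
case: e => [/= -> //|a e ey].
by case: (Y_bifix _ _ (X_sub_Y _ Xx) Yy) => _ []; exists (a :: e).
Qed.

Lemma delta_le_suffix_comparable u : F u -> ~ (exists x, X x /\ factor u x) ->
  (forall s, F s -> s <> [::] -> suffix_comparable s) ->
  forall w, F w -> delta X w <= delta X u.
Proof.
move=> Fu uNfact F_sc w Fw; have [t Futw] := recurrent_bridge Fu Fw.
apply: leq_trans (delta_factor_le (u ++ t) w [::]) _.
rewrite cats0 -catA (delta_catr_eq (q := t ++ w)) // => k k_range; set q := take k (t ++ w).
have Fuq : F (u ++ q).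
  by apply: (@recurrent_factor [::] _ (drop k (t ++ w))); rewrite /= -catA cat_take_drop.
case: (F_sc _ Fuq (cat_neq_nil_r (take_neq_nil k_range))) => // -[p [x [Xx ex]]].
by case: uNfact; exists x; split=> //; exists p, q; rewrite ex catA.
Qed.

Lemma delta_le_prefix_comparable u : F u -> ~ (exists x, X x /\ factor u x) ->
  (forall r, F r -> r <> [::] -> prefix_comparable r) ->
  forall w, F w -> delta X w <= delta X u.
Proof.
move=> Fu uNfact F_pc w Fw; have [t Fwtu] := recurrent_bridge Fw Fu.
apply: leq_trans (delta_factor_le [::] w (t ++ u)) _.
rewrite /= catA (delta_catl_eq (p := w ++ t)) // => k lt_k; set r := drop k (w ++ t).
have Fru : F (r ++ u).
  by apply: (@recurrent_factor (take k (w ++ t)) _ [::]); rewrite cats0 catA cat_take_drop -catA.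
case: (F_pc _ Fru (cat_neq_nil_l (drop_neq_nil lt_k))) => // -[x [q [Xx ex]]].
by case: uNfact; exists x; split=> //; exists r, q; rewrite ex catA.
Qed.

Lemma F_maximal_comparable : F_maximal_bifix F X ->
  (forall s, F s -> s <> [::] -> suffix_comparable s) \/
  (forall r, F r -> r <> [::] -> prefix_comparable r).
Proof.
move=> [X_bifix [_ X_max]].
case: (classic (exists s, [/\ F s, s <> [::] & ~ suffix_comparable s])) => [|no_s]; last first.
  by left=> s Fs s_neq0; apply: NNPP => sNsc; apply: no_s; exists s.
case: (classic (exists r, [/\ F r, r <> [::] & ~ prefix_comparable r])) => [|no_r]; last first.
  by right=> r Fr r_neq0; apply: NNPP => rNpc; apply: no_r; exists r.
move=> [r [Fr r_neq0 rNpc]] [s [Fs _ sNsc]]; exfalso.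
have [v Frvs] := recurrent_bridge Fr Fs; set z := r ++ v ++ s in Frvs.
have z_free x : X x -> [/\ ~ proper_prefix x z, ~ proper_prefix z x,
                           ~ proper_suffix x z & ~ proper_suffix z x].
  move=> Xx; split=> -[e [_ ez]].
  - by case: (cat_eq_cases ez) => -[e' [er _]]; apply: rNpc; [left | right]; exists x, e'.
  - by apply: rNpc; right; exists x, (v ++ s ++ e); split=> //; rewrite ez /z -!catA.
  - move: ez; rewrite /z catA => /cat_eq_cases [[e' [_ ex]]|[e' [_ es]]]; apply: sNsc.
      by right; exists e', x.
    by left; exists e', x.
  by apply: sNsc; right; exists (e ++ r ++ v), x; split=> //; rewrite ez /z -!catA.
have Y_sub_F : lsubset (fun y => X y \/ y = z) F by move=> y [/X_sub_F|->].
have X_sub_Y : lsubset X (fun y => X y \/ y = z) by move=> y Xy; left.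
have Y_bifix := bifix_code_add X_bifix (cat_neq_nil_l r_neq0) z_free.
have Xz := X_max _ Y_bifix Y_sub_F X_sub_Y z (or_intror erefl).
by apply: rNpc; right; exists z, (v ++ s).
Qed.

Lemma thin_maximal_degree : F_thin F X -> F_maximal_bifix F X -> exists d, is_F_degree F X d.
Proof.
move=> [u [Fu uNfact]] /F_maximal_comparable F_comp.
apply: (@bounded_degree _ _ (delta X u)); first by exists u.
case: F_comp => [F_sc|F_pc]; first exact: delta_le_suffix_comparable.
exact: delta_le_prefix_comparable.
Qed.

End Recurrent.
End Parses.
End Words.

Theorem mainTheorem2 (A : finType) (F X : lang A) :
  recurrent F -> lsubset X F -> bifix_code X ->
  ((F_thin F X /\ F_maximal_bifix F X) <-> exists d, is_F_degree F X d) /\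
  (forall d, is_F_degree F X d ->
     forall w, internal X w <-> (F w /\ (delta X w < d)%N)).
Proof.
move=> F_rec X_sub_F [X_neq_nil X_bifix].
have X_prefix_free x y : X x -> X y -> ~ proper_prefix x y.
  by move=> Xx Xy; case: (X_bifix x y Xx Xy).
have X_suffix_free x y : X x -> X y -> ~ proper_suffix x y.
  by move=> Xx Xy; case: (X_bifix x y Xx Xy).
split.
  split=> [[X_thin X_max]|[d Xd]].
    exact: (thin_maximal_degree X_neq_nil X_prefix_free X_suffix_free F_rec X_sub_F
              X_thin X_max).
  split; first exact: (degree_thin X_neq_nil X_prefix_free X_suffix_free F_rec X_sub_F Xd).
  exact: (degree_maximal X_neq_nil X_prefix_free X_suffix_free F_rec X_sub_F Xd).
move=> d Xd w; split=> [|[Fw lt_wd]].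
  exact: (internal_delta_lt X_neq_nil X_prefix_free X_suffix_free F_rec X_sub_F Xd).
exact: (delta_lt_internal X_neq_nil X_prefix_free X_suffix_free F_rec Xd Fw lt_wd).
Qed.
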